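(* Let $\mathcal{D}$ be a finite set and $n\ge4$, $m\ge0$ integers. The share of $n$-ary relations $R$ on $\mathcal{D}$ with $\mathrm{ter}(R)\le m$ among all $2^{|\mathcal{D}|^n}$ $n$-ary relations on $\mathcal{D}$ is $<1$ when $|\mathcal{D}|>\binom{\frac{3m+n}{2}}{n-1}$, and tends to $0$ as $|\mathcal{D}|\to\infty$. In particular, there exist $n$-ary relations of arbitrarily high ternarity.
   Context: An $n$-ary relation is $R\subseteq\mathcal{D}^\Sigma$ with $|\Sigma|=n$; $\pi_\Gamma$ restricts tuples to $\Gamma$; the join of $R_i\subseteq\mathcal{D}^{\Lambda_i}$ is $\{a\in\mathcal{D}^{\cup\Lambda_i}:a|_{\Lambda_i}\in R_i\ \forall i\}$. Bonds: relations $R_i\subseteq\mathcal{D}^{\Lambda_i}$ are bondable if no attribute lies in three or more $\Lambda_i$; their bond is $\pi_\Gamma[R_1\Join\dots\Join R_m]$ where $\Gamma$ is the set of attributes lying in exactly one $\Lambda_i$. A bond is subternaric if all factors have arity $\le3$. The ternarity $\mathrm{ter}(R)$ is the minimal number of factors of arity $3$ over all representations of $R$ as a subternaric bond, and $\infty$ if none exists. *)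

From HB Require Import structures.
From mathcomp Require Import all_boot all_order all_algebra.
From mathcomp Require Import boolp.
From Stdlib Require List.
Set Implicit Arguments. Unset Strict Implicit. Unset Printing Implicit Defensive.
Import Order.TTheory GRing.Theory Num.Theory.

(* A tuple over any attribute set is
   represented by a total assignment  nat -> D  (values outside the attribute
   set are irrelevant).  The n-ary relations considered have attribute set
   Sigma = {0, ..., n-1}. *)

(* A factor: an attribute set Lambda (a finite list of attribute names,
   read as a set) together with a relation R_i subset D^Lambda, given as a
   predicate on assignments that depends only on the values on Lambda. *)
Record factor (D : Type) := Factor { fattrs : seq nat; frel : (nat -> D) -> Prop }.

Section Bonds.
Variable D : Type.

Definition rel_on (f : factor D) : Prop :=
  forall a b : nat -> D, {in fattrs f, a =1 b} -> (frel f a <-> frel f b).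

Definition arity (f : factor D) : nat := size (undup (fattrs f)).

Definition occ (fs : seq (factor D)) (x : nat) : nat :=
  count (fun f => x \in fattrs f) fs.

Definition bondable (fs : seq (factor D)) : Prop := forall x, occ fs x <= 2.

Definition in_Gamma (fs : seq (factor D)) (x : nat) : bool := occ fs x == 1.

(* the bond pi_Gamma[R_1 join ... join R_m]: a|_Gamma belongs to it iff
   a|_Gamma extends to an assignment b of all attributes with b|_{Lambda_i} in R_i
   for every i *)
Definition bond (fs : seq (factor D)) (a : nat -> D) : Prop :=
  exists b : nat -> D, (forall x, in_Gamma fs x -> a x = b x) /\
                       List.Forall (fun f => frel f b) fs.

Definition subternaric (fs : seq (factor D)) : Prop :=
  List.Forall (fun f => arity f <= 3) fs.

Definition n_ternary (fs : seq (factor D)) : nat := count (fun f => arity f == 3) fs.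
End Bonds.

Definition relation (D : finType) (n : nat) := {set {ffun 'I_n -> D}}.

Definition represents (D : finType) (n : nat) (R : relation D n)
    (fs : seq (factor D)) : Prop :=
  List.Forall (@rel_on D) fs /\ bondable fs /\
  (forall x, in_Gamma fs x = (x < n)%N) /\
  (forall a : nat -> D, [ffun i : 'I_n => a (nat_of_ord i)] \in R <-> bond fs a).

(* ter(R) <= m  (ter(R) = infinity iff no subternaric representation exists) *)
Definition ter_le (D : finType) (n : nat) (R : relation D n) (m : nat) : Prop :=
  exists fs : seq (factor D),
    represents R fs /\ subternaric fs /\ (n_ternary fs <= m)%N.

Definition share (D : finType) (n m : nat) : rat :=
  (#|[set R : relation D n | `[< ter_le R m >] ]|%:R / (2 ^ (#|D| ^ n))%:R)%R.

Definition gbinom (x : rat) (k : nat) : rat :=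
  ((\prod_(i < k) (x - i%:R)) / (k`!)%:R)%R.

(* Fusing a factor of arity at most 2 with another factor that shares one of
   its bound attributes projects that attribute away and never creates a new
   ternary factor.  Hence every relation of ternarity at most m has a
   representation in which unary and binary factors involve free attributes
   only.  Such a representation is determined by at most m ternary relations
   on at most n + 3m attributes, one binary relation per free attribute and
   one bit, so on a domain of size d at most 2^(m(3(n+3m+1) + d^3) + n(n+d^2) + 1)
   relations have ternarity at most m.  For n >= 4 this is at most 2^(d^n - d)
   as soon as d is large, or 3m + n < 2d; the bound on the binomial
   coefficient gives the latter when n <= 3m.  When n > 3m the equality
   relation has ternarity above m: in a normal representation of it, a binary
   factor on a free attribute would let that coordinate change alone, so all n
   free attributes lie in the at most m ternary factors. *)

From Stdlib Require Import Permutation.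
From HB Require Import structures.
From mathcomp Require Import all_boot all_order all_algebra boolp zify ring.
Import Order.TTheory GRing.Theory Num.Theory.
Set Implicit Arguments. Unset Strict Implicit. Unset Printing Implicit Defensive.

Section FactorLists.
Variable D : Type.
Implicit Types (fs rest : seq (factor D)) (f g : factor D) (p : pred (factor D))
  (a b v : nat -> D).

Lemma In_count p fs f : List.In f fs -> p f -> 0 < count p fs.
Proof. by elim: fs => //= h fs IH [<- ->|/IH]; [|lia]. Qed.

Lemma count_gt0_In p fs : 0 < count p fs -> exists2 f, List.In f fs & p f.
Proof.
elim: fs => //= h fs IH; case ph: (p h) => /=; first by exists h; [left|].
by move/IH => [f Hf pf]; exists f; [right|].
Qed.

Lemma count1_In_eq p fs f g :
  count p fs = 1 -> List.In f fs -> p f -> List.In g fs -> p g -> f = g.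
Proof.
elim: fs => //= h fs IH cnt [<-|Hf] pf [<-|Hg] pg //.
- by move: cnt (In_count Hg pg); rewrite pf; lia.
- by move: cnt (In_count Hf pf); rewrite pg; lia.
- by apply: IH => //; move: cnt (In_count Hf pf); case: (p h); lia.
Qed.

Lemma In_filter p fs f : List.In f (filter p fs) <-> List.In f fs /\ p f.
Proof.
elim: fs => [|h fs IH] /=; first by split=> [|[]].
case ph: (p h) => /=; split.
- by case=> [<-|/IH []]; auto.
- by case=> [[<-|hf] pf]; [left|right; apply/IH].
- by move/IH=> []; auto.
- by case=> [[<-|hf] pf]; [rewrite pf in ph|apply/IH].
Qed.

Lemma perm_In_cons fs f : List.In f fs -> exists rest, Permutation fs (f :: rest).
Proof.
move=> Hf; have [l1 [l2 ->]] := List.in_split f fs Hf; exists (l1 ++ l2).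
exact/Permutation_sym/Permutation_middle.
Qed.

Lemma count_Permutation p fs fs' : Permutation fs fs' -> count p fs = count p fs'.
Proof. by elim=> //= [f l l' _ -> | f g l | l l' l'' _ -> _ ->]; lia. Qed.

Lemma size_Permutation fs fs' : Permutation fs fs' -> size fs = size fs'.
Proof. by move=> /(count_Permutation predT); rewrite !count_predT. Qed.

Lemma occ_Permutation fs fs' : Permutation fs fs' -> occ fs =1 occ fs'.
Proof. by move=> Hp x; apply: count_Permutation. Qed.

Lemma in_Gamma_Permutation fs fs' : Permutation fs fs' -> in_Gamma fs =1 in_Gamma fs'.
Proof. by move=> Hp x; rewrite /in_Gamma (occ_Permutation Hp). Qed.

Lemma bond_Permutation fs fs' a : Permutation fs fs' -> bond fs a -> bond fs' a.
Proof.
move=> Hp [b [Gb Fb]]; exists b; split; last exact: Permutation_Forall Hp Fb.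
by move=> x; rewrite -(in_Gamma_Permutation Hp); apply: Gb.
Qed.

Definition shared f g x := (x \in fattrs f) && (x \in fattrs g).

(* The bond of the two-factor list [f; g]. *)
Definition fuse f g : factor D :=
  Factor [seq x <- fattrs g ++ fattrs f | ~~ shared f g x]
    (fun b => exists b', (forall x, ~~ shared f g x -> b' x = b x) /\ frel f b' /\ frel g b').

Lemma rel_on_fuse f g : rel_on f -> rel_on g -> rel_on (fuse f g).
Proof.
move=> Hf Hg; suff fuse_agree a b : {in fattrs (fuse f g), a =1 b} ->
    frel (fuse f g) a -> frel (fuse f g) b.
  by move=> a b ab; split; apply: fuse_agree => // x /ab.
move=> ab [b' [Hb' [fb' gb']]].
pose c x := if shared f g x then b' x else b x.
have b'c x : x \in fattrs f ++ fattrs g -> b' x = c x.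
  rewrite /c; case sh: (shared f g x) => // x_fg.
  by rewrite Hb' ?sh // ab // mem_filter sh mem_cat orbC -mem_cat.
exists c; split; first by move=> x /negbTE; rewrite /c => ->.
by split; [apply/(Hf b')|apply/(Hg b')] => // x x_in; apply: b'c; rewrite mem_cat x_in ?orbT.
Qed.

Section Fuse.
Variables (f g : factor D) (rest : seq (factor D)).
Hypothesis fgb : bondable [:: f, g & rest].

Lemma occ_fuse x :
  occ (fuse f g :: rest) x = if shared f g x then 0 else occ [:: f, g & rest] x.
Proof.
have := fgb x; rewrite /occ /= mem_filter mem_cat /shared.
by case: (x \in fattrs f); case: (x \in fattrs g) => /=; lia.
Qed.

Lemma in_Gamma_fuse : in_Gamma (fuse f g :: rest) =1 in_Gamma [:: f, g & rest].
Proof.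
move=> x; rewrite /in_Gamma occ_fuse; case sh: (shared f g x) => //.
by move: sh; rewrite /occ /= => /andP [-> ->].
Qed.

Lemma bondable_fuse : bondable (fuse f g :: rest).
Proof. by move=> x; rewrite occ_fuse; case: ifP => // _; apply: fgb. Qed.

Lemma bond_fuse a : List.Forall (@rel_on D) rest ->
  bond (fuse f g :: rest) a <-> bond [:: f, g & rest] a.
Proof.
move=> /List.Forall_forall rel_rest; split.
- move=> [b [Gb /List.Forall_cons_iff [[b' [Hb' [fb' gb']]] /List.Forall_forall Frest]]].
  exists b'; split.
    move=> x x_G; rewrite Gb ?Hb' ?in_Gamma_fuse //.
    by apply/negP=> /andP [xf xg]; move: x_G; rewrite /in_Gamma /occ /= xf xg.
  do 2 constructor => //; apply/List.Forall_forall => k Hk.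
  apply/(rel_rest k Hk b) => [x xk|]; last exact: Frest.
  rewrite Hb' //; apply/negP => /andP [xf xg].
  by move: (fgb x) (In_count (p := fun k => x \in fattrs k) Hk xk); rewrite /occ /= xf xg; lia.
- move=> [b [Gb /List.Forall_cons_iff [fb /List.Forall_cons_iff [gb Frest]]]].
  exists b; split; first by move=> x; rewrite in_Gamma_fuse; apply: Gb.
  by constructor => //; exists b.
Qed.

End Fuse.

Lemma arity_fuse f g x : x \in fattrs f -> x \in fattrs g -> arity f <= 2 ->
  arity (fuse f g) <= arity g.
Proof.
move=> xf xg af; rewrite /arity.
have sub : {subset undup (fattrs (fuse f g)) <=
               rem x (undup (fattrs g)) ++ rem x (undup (fattrs f))}.
  move=> y; rewrite mem_undup mem_filter => /andP [ny yfg].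
  have yx : y != x by apply: contraNneq ny => ->; rewrite /shared xf xg.
  by rewrite mem_cat !mem_rem_uniq ?undup_uniq // !inE !mem_undup yx -mem_cat.
have := uniq_leq_size (undup_uniq _) sub.
rewrite size_cat !size_rem ?mem_undup //.
have : 0 < size (undup (fattrs g)).
  by rewrite -has_predT; apply/hasP; exists x; rewrite ?mem_undup.
by move: af; rewrite /arity; lia.
Qed.

Definition normal fs := forall f, List.In f fs -> arity f <= 2 ->
  forall x, x \in fattrs f -> occ fs x = 1.

Lemma bond_mix fs f a a' : List.Forall (@rel_on D) fs -> List.In f fs ->
  (forall x, x \in fattrs f -> occ fs x = 1) -> bond fs a -> bond fs a' ->
  bond fs (fun x => if x \in fattrs f then a x else a' x).
Proof.
move=> /List.Forall_forall rel Hf free [b [Gb /List.Forall_forall Fb]].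
move=> [b' [Gb' /List.Forall_forall Fb']].
exists (fun x => if x \in fattrs f then b x else b' x); split.
  by move=> x xG; case: ifP => _; [apply: Gb | apply: Gb'].
apply/List.Forall_forall => k Hk.
have [/hasP [y yk yf]|/hasPn disj] := boolP (has (mem (fattrs f)) (fattrs k)).
  have <- : f = k := count1_In_eq (p := fun k => y \in fattrs k) (free y yf) Hf yf Hk yk.
  by apply/(rel f Hf b) => [x /= ->|]; last exact: Fb.
by apply/(rel k Hk b') => [x /disj /= /negbTE ->|]; last exact: Fb'.
Qed.

Definition small fs := [seq f <- fs | arity f <= 2].
Definition ternary fs := [seq f <- fs | arity f == 3].

Lemma Forall_filter (P : factor D -> Prop) (p : pred (factor D)) fs :
  List.Forall P fs -> List.Forall P (filter p fs).
Proof. by move=> /List.Forall_forall Pfs; apply/List.Forall_forall => f /In_filter [/Pfs]. Qed.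

Lemma arity_ternary fs f : List.In f (ternary fs) -> arity f = 3.
Proof. by move=> /In_filter [_ /eqP]. Qed.

Lemma size_ternary fs : size (ternary fs) = n_ternary fs.
Proof. exact: size_filter. Qed.

Definition ternary_attrs fs := flatten [seq undup (fattrs f) | f <- ternary fs].

Lemma size_ternary_attrs fs : size (ternary_attrs fs) = 3 * n_ternary fs.
Proof.
rewrite /n_ternary /ternary_attrs; elim: fs => //= f fs IH.
by case: eqP => [af|_] /=; rewrite ?size_cat IH //; rewrite -/(arity f) af; lia.
Qed.

Lemma mem_ternary_attrs fs f x :
  List.In f fs -> arity f = 3 -> x \in fattrs f -> x \in ternary_attrs fs.
Proof.
move=> Hf af xf; apply/flattenP; exists (undup (fattrs f)); rewrite ?mem_undup //.
elim: fs Hf => //= h fs IH [->|/IH]; first by rewrite af eqxx mem_head.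
by case: ifP => // _; rewrite inE orbC => ->.
Qed.

Lemma ForallP (p : pred (factor D)) fs : reflect (List.Forall p fs) (all p fs).
Proof.
elim: fs => /= [|f fs IH]; first by left.
apply: (iffP andP) => [[pf /IH]|/List.Forall_cons_iff [pf /IH]]; by [constructor|].
Qed.

Lemma bond_split fs a : List.Forall (@rel_on D) fs -> subternaric fs -> normal fs ->
  bond fs a <->
  List.Forall (fun f => frel f a) (small fs) /\
  exists b, (forall x, in_Gamma fs x -> a x = b x) /\
            List.Forall (fun f => frel f b) (ternary fs).
Proof.
move=> /List.Forall_forall rel /List.Forall_forall sub nf.
have small_agree f b : List.In f fs -> arity f <= 2 ->
    (forall x, in_Gamma fs x -> a x = b x) -> frel f a <-> frel f b.
  move=> Hf af ab; apply: (rel f Hf) => x xf; apply: ab.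
  by rewrite /in_Gamma (nf f Hf af x xf).
split.
- move=> [b [ab /List.Forall_forall Fb]]; split.
    by apply/List.Forall_forall => f /In_filter [Hf af]; apply/(small_agree f b) => //; apply: Fb.
  by exists b; split => //; apply/List.Forall_forall => f /In_filter [Hf _]; apply: Fb.
- move=> [/List.Forall_forall Fa [b [ab /List.Forall_forall Fb]]].
  exists b; split => //; apply/List.Forall_forall => f Hf.
  have := sub f Hf; rewrite leq_eqVlt ltnS => /orP [f3|af].
    by apply: Fb; apply/In_filter.
  by apply/(small_agree f b) => //; apply: Fa; apply/In_filter.
Qed.

Lemma exists_rename fs n (rho sigma : nat -> nat) a :
  List.Forall (@rel_on D) fs ->
  (forall x, x < n -> rho x = x) -> (forall x, x < n -> sigma x = x) ->
  (forall f x, List.In f fs -> x \in fattrs f -> sigma (rho x) = x) ->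
  (exists b, (forall x, x < n -> a x = b x) /\ List.Forall (fun f => frel f b) fs) <->
  (exists v, (forall x, x < n -> a x = v x) /\ List.Forall (fun f => frel f (v \o rho)) fs).
Proof.
move=> /List.Forall_forall rel rho_id sigma_id sigmaK; split.
- move=> [b [ab /List.Forall_forall Fb]]; exists (b \o sigma); split.
    by move=> x xn /=; rewrite sigma_id ?ab.
  apply/List.Forall_forall => f Hf; apply/(rel f Hf b); last exact: Fb.
  by move=> x xf /=; rewrite (sigmaK f).
- move=> [v [av Fv]]; exists (v \o rho); split => // x xn /=.
  by rewrite rho_id ?av.
Qed.

Definition partner f x := head x [seq y <- fattrs f | y != x].

Lemma partner_eq f x y : arity f <= 2 -> x \in fattrs f -> y \in fattrs f -> y != x ->
  partner f x = y.
Proof.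
move=> af xf yf yx; rewrite /partner.
have : y \in [seq z <- fattrs f | z != x] by rewrite mem_filter yx.
case E: [seq z <- fattrs f | z != x] => [//|z zs] _ /=.
have : z \in [seq z <- fattrs f | z != x] by rewrite E mem_head.
rewrite mem_filter => /andP [zx zf].
apply/eqP; apply: contraTT af => zy; rewrite -ltnNge.
have sub : {subset [:: x; y; z] <= undup (fattrs f)}.
  by move=> w; rewrite !inE mem_undup => /or3P [] /eqP ->.
apply: uniq_leq_size sub; rewrite /= !inE negb_or eq_sym yx eq_sym zx.
by rewrite eq_sym zy.
Qed.

Lemma partner_in f x : partner f x \in x :: fattrs f.
Proof.
rewrite /partner; case E: [seq y <- fattrs f | y != x] => [|y ys] /=; first exact: mem_head.
have : y \in [seq y <- fattrs f | y != x] by rewrite E mem_head.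
by rewrite mem_filter inE => /andP [_ ->]; rewrite orbT.
Qed.

Lemma frel_partner f x b : rel_on f -> arity f <= 2 -> x \in fattrs f ->
  frel f b <-> frel f (fun y => if y == x then b x else b (partner f x)).
Proof.
move=> rel af xf; apply: rel => y yf /=.
by case: eqP => [-> //|/eqP yx]; rewrite (partner_eq af xf yf yx).
Qed.

End FactorLists.

Section Normalization.
Variables (D : finType) (n : nat) (R : relation D n).
Implicit Types fs rest : seq (factor D).

Lemma represents_Permutation fs fs' : Permutation fs fs' -> represents R fs -> represents R fs'.
Proof.
move=> p [rel [bd [G B]]]; split; first exact: Permutation_Forall p rel.
split; first by move=> x; rewrite -(occ_Permutation p).
split; first by move=> x; rewrite -(in_Gamma_Permutation p).
by move=> a; rewrite B; split; apply: bond_Permutation => //; apply: Permutation_sym.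
Qed.

Lemma represents_fuse f g rest :
  represents R [:: f, g & rest] -> represents R (fuse f g :: rest).
Proof.
move=> [/List.Forall_cons_iff [rf /List.Forall_cons_iff [rg rrest]] [bd [G B]]].
split; first by constructor => //; apply: rel_on_fuse.
split; first exact: bondable_fuse.
split; first by move=> x; rewrite in_Gamma_fuse.
by move=> a; rewrite B bond_fuse.
Qed.

Lemma fuse_step fs f x :
  represents R fs -> subternaric fs -> List.In f fs -> arity f <= 2 ->
  x \in fattrs f -> occ fs x != 1 ->
  exists fs', [/\ represents R fs', subternaric fs', n_ternary fs' <= n_ternary fs
                & size fs' < size fs].
Proof.
move=> rep sub Hf af xf occx.
have [rest p1] := perm_In_cons Hf.
have [g Hg xg] : exists2 g, List.In g rest & x \in fattrs g.
  apply: count_gt0_In; move: occx (rep.2.1 x).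
  by rewrite !(occ_Permutation p1 x) /occ /= xf; lia.
have [rest' p2] := perm_In_cons Hg.
have p : Permutation fs [:: f, g & rest'] := Permutation_trans p1 (perm_skip f p2).
have rep' := represents_Permutation p rep.
move: (Permutation_Forall p sub) => /List.Forall_cons_iff [_ /List.Forall_cons_iff [sg srest]].
have fg := arity_fuse xf xg af.
exists (fuse f g :: rest'); split.
- exact: represents_fuse.
- by constructor => //; apply: leq_trans fg sg.
- by rewrite /n_ternary (count_Permutation _ p) /=; move: sg fg; lia.
- by rewrite (size_Permutation p).
Qed.

Lemma normal_represents fs : represents R fs -> subternaric fs ->
  exists fs', [/\ represents R fs', subternaric fs', n_ternary fs' <= n_ternary fs
                & normal fs'].
Proof.
elim: {fs}(size fs).+1 {-2}fs (ltnSn (size fs)) => // k IH fs fsk rep sub.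
have [nf|nnf] := pselect (normal fs); first by exists fs.
have [f [Hf af [x xf occx]]] :
    exists f, [/\ List.In f fs, arity f <= 2 & exists2 x, x \in fattrs f & occ fs x != 1].
  apply: contrapT => nex; apply: nnf => f Hf af x xf; apply/eqP/negPn/negP => occx.
  by apply: nex; exists f; split => //; exists x.
have [fs' [rep' sub' ter' size']] := fuse_step rep sub Hf af xf occx.
have [fs'' [rep'' sub'' ter'' nf'']] := IH fs' (leq_trans size' fsk) rep' sub'.
by exists fs''; split => //; apply: leq_trans ter'' ter'.
Qed.

End Normalization.

Lemma exists_notin_lt (s : seq nat) n : size (undup s) < n -> exists2 j, j < n & j \notin s.
Proof.
move=> sn; apply: contrapT => all_in; move: sn; rewrite ltnNge; apply/negP/negPn.
rewrite -[n in n <= _](size_iota 0); apply: uniq_leq_size (iota_uniq 0 n) _ => j.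
rewrite mem_iota mem_undup /= => jn; apply: contrapT => /negP js.
by apply: all_in; exists j.
Qed.

Section EqualityRelation.
Variables (D : finType) (n : nat).

Definition eq_rel : relation D n := [set a : {ffun 'I_n -> D} | [forall i, forall j, a i == a j]].

Lemma const_in_eq_rel (d : D) : [ffun _ : 'I_n => d] \in eq_rel.
Proof. by rewrite inE; apply/forallP => i; apply/forallP => j; rewrite !ffunE. Qed.

Lemma normal_eq_rel_small_nil fs f : 1 < #|D| -> 2 < n ->
  represents eq_rel fs -> normal fs -> List.In f fs -> arity f <= 2 -> fattrs f = [::].
Proof.
move=> D2 n2 [rel [_ [G B]]] nf Hf af.
case fx: (fattrs f) => [//|x xs]; have xf : x \in fattrs f by rewrite fx mem_head.
have [d0 [d1 [_ _ d01]]] := card_gt1P D2.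
have /B mix : bond fs (fun y => if y \in fattrs f then d0 else d1).
  by apply: bond_mix (nf f Hf af) _ _ => //; apply/B/const_in_eq_rel.
have [j jn jf] : exists2 j, j < n & j \notin fattrs f := exists_notin_lt (leq_ltn_trans af n2).
have xn : x < n by rewrite -G /in_Gamma (nf f Hf af x xf).
move: mix; rewrite inE => /forallP /(_ (Ordinal xn)) /forallP /(_ (Ordinal jn)).
by rewrite !ffunE /= xf (negbTE jf) (negbTE d01).
Qed.

Lemma eq_rel_not_ter_le m : 1 < #|D| -> 2 < n -> 3 * m < n -> ~ ter_le eq_rel m.
Proof.
move=> D2 n2 mn [fs0 [rep0 [sub0 ter0]]].
have [fs [rep sub ter nf]] := normal_represents rep0 sub0.
suff : n <= 3 * n_ternary fs by lia.
rewrite -size_ternary_attrs -[n in n <= _](size_iota 0).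
apply: uniq_leq_size (iota_uniq 0 n) _ => x; rewrite mem_iota /= => xn.
have [f Hf xf] : exists2 f, List.In f fs & x \in fattrs f.
  by apply: count_gt0_In; move: (rep.2.2.1 x); rewrite xn /in_Gamma /occ => /eqP ->.
apply: (mem_ternary_attrs Hf _ xf); move/List.Forall_forall: sub => /(_ f Hf).
rewrite leq_eqVlt ltnS => /orP [/eqP //|af].
by rewrite (normal_eq_rel_small_nil D2 n2 rep nf Hf af) in xf.
Qed.

End EqualityRelation.

Lemma all_nth_ord (T : Type) (x0 : T) (p : pred T) (s : seq T) m :
  size s <= m -> p x0 -> (forall j : 'I_m, p (nth x0 s j)) <-> all p s.
Proof.
move=> sm px0; split => [ps|/all_nthP ps j].
  by apply/(all_nthP x0) => j js; apply: (ps (Ordinal (leq_trans js sm))).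
by case: (ltnP j (size s)) => [/ps //|js]; rewrite nth_default.
Qed.


Section Code.
Variables (D : finType) (n m : nat).
Implicit Types (fs S T : seq (factor D)) (f : factor D).

Definition pair_rel f x : {set D * D} :=
  [set t : D * D | `[< frel f (fun y => if y == x then t.1 else t.2) >]].

Definition triple_rel f : {set {ffun 'I_3 -> D}} :=
  [set t : {ffun 'I_3 -> D} | `[< frel f (fun y => t (inord (index y (undup (fattrs f))))) >]].

Lemma frel_pair_rel f x b : rel_on f -> arity f <= 2 -> x \in fattrs f ->
  frel f b <-> (b x, b (partner f x)) \in pair_rel f x.
Proof.
move=> rel af xf; rewrite inE (frel_partner b rel af xf).
by split => [/asboolP|/asboolP].
Qed.

Lemma frel_triple_rel f b : rel_on f -> arity f = 3 ->
  frel f b <-> [ffun k : 'I_3 => b (nth 0 (undup (fattrs f)) k)] \in triple_rel f.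
Proof.
move=> rel af; rewrite inE.
have agree : {in fattrs f, b =1 fun y =>
    [ffun k : 'I_3 => b (nth 0 (undup (fattrs f)) k)] (inord (index y (undup (fattrs f))))}.
  move=> y yf; have := index_mem y (undup (fattrs f)); rewrite mem_undup yf -/(arity f) af.
  by move=> ylt; rewrite ffunE inordK ?nth_index ?mem_undup.
by split => [/(rel _ _ agree)/asboolP|/asboolP/(rel _ _ agree)].
Qed.

Definition nvars := (n + 3 * m).+1.

(* A normal representation with at most m ternary factors is recorded by the
   attributes (renumbered below nvars) and the relation of each ternary factor,
   by the partner of each free attribute in its small factor together with
   their binary relation, and by whether the attribute-free factors hold. *)
Definition code := ({ffun 'I_m -> {ffun 'I_3 -> 'I_nvars} * {set {ffun 'I_3 -> D}}}
                    * {ffun 'I_n -> 'I_n * {set D * D}} * bool)%type.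

Definition triple_holds (v : nat -> D)
    (e : {ffun 'I_3 -> 'I_nvars} * {set {ffun 'I_3 -> D}}) :=
  [ffun k => v (e.1 k)] \in e.2.

Definition code_holds (c : code) (a : {ffun 'I_n -> D}) : Prop :=
  [/\ c.2, forall i, (a i, a (c.1.2 i).1) \in (c.1.2 i).2 &
   exists v : nat -> D, (forall i : 'I_n, a i = v i) /\ forall j, triple_holds v (c.1.1 j)].

Definition decode (c : code) : relation D n := [set a | `[< code_holds c a >]].

Definition constants_hold S :=
  `[< forall f, List.In f S -> fattrs f = [::] -> forall b, frel f b >].

Definition small_code S : {ffun 'I_n -> 'I_n * {set D * D}} :=
  [ffun i : 'I_n => if List.find (fun f => val i \in fattrs f) S is Some f
             then (insubd i (partner f i), pair_rel f i) else (i, setT)].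

Lemma small_codeP S b : List.Forall (@rel_on D) S ->
  (forall f, List.In f S -> arity f <= 2) ->
  (forall f x, List.In f S -> x \in fattrs f -> x < n) ->
  (forall f g x, List.In f S -> List.In g S -> x \in fattrs f -> x \in fattrs g -> f = g) ->
  List.Forall (fun f => frel f b) S <->
  constants_hold S /\ forall i : 'I_n, (b i, b (small_code S i).1) \in (small_code S i).2.
Proof.
move=> /List.Forall_forall rel small free owner.
have partner_lt f (i : 'I_n) : List.In f S -> val (insubd i (partner f i)) = partner f i.
  move=> Hf; rewrite val_insubd; move: (partner_in f i); rewrite inE.
  by case/orP => [/eqP ->|/(free f _ Hf) ->]; rewrite ?ltn_ord.
split => [/List.Forall_forall Fb|[/asboolP const code_i]].
- split=> [|i].
    apply/asboolP => f Hf fnil b'; apply/(rel f Hf b); last exact: Fb.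
    by move=> x; rewrite fnil.
  rewrite ffunE; case E: List.find => [f|]; last by rewrite inE.
  have [Hf ifa] := List.find_some _ _ E.
  by rewrite partner_lt //; apply/frel_pair_rel => //; [apply: rel|apply: small|apply: Fb].
- apply/List.Forall_forall => f Hf; case fx: (fattrs f) => [|x xs]; first exact: const.
  have xf : x \in fattrs f by rewrite fx mem_head.
  have xn := free f x Hf xf; move: (code_i (Ordinal xn)); rewrite ffunE /=.
  case E: List.find => [g|]; last by move: (List.find_none _ _ E f Hf); rewrite /= xf.
  have [Hg xg] := List.find_some _ _ E; have fg := owner f g x Hf Hg xf xg; subst g.
  by rewrite partner_lt // => /frel_pair_rel; apply => //; [apply: rel|apply: small].
Qed.

Definition triple_code (rho : nat -> nat) f :=
  ([ffun k : 'I_3 => inord (rho (nth 0 (undup (fattrs f)) k)) : 'I_nvars], triple_rel f).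

Definition ternary_code rho T : {ffun 'I_m -> {ffun 'I_3 -> 'I_nvars} * {set {ffun 'I_3 -> D}}} :=
  [ffun j : 'I_m => nth ([ffun => ord0], setT) (map (triple_code rho) T) j].

Lemma ternary_codeP rho T v : List.Forall (@rel_on D) T ->
  (forall f, List.In f T -> arity f = 3) -> size T <= m ->
  (forall f x, List.In f T -> x \in fattrs f -> rho x < nvars) ->
  List.Forall (fun f => frel f (v \o rho)) T <-> forall j, triple_holds v (ternary_code rho T j).
Proof.
move=> /List.Forall_forall rel ter Tm rho_lt.
have tripleP f : List.In f T -> triple_holds v (triple_code rho f) <-> frel f (v \o rho).
  move=> Hf; rewrite (frel_triple_rel _ (rel f Hf) (ter f Hf)) /triple_holds /=.
  set xs := undup (fattrs f).
  have xs_lt (k : 'I_3) : rho (nth 0 xs k) < nvars.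
    by apply: (rho_lt f _ Hf); rewrite -mem_undup mem_nth // -/(arity f) ter.
  suff -> : [ffun k : 'I_3 => v ([ffun k : 'I_3 => inord (rho (nth 0 xs k)) : 'I_nvars] k)] =
            [ffun k : 'I_3 => (v \o rho) (nth 0 xs k)] by [].
  by apply/ffunP => k; rewrite !ffunE inordK.
apply: (@iff_trans _ (all (triple_holds v) (map (triple_code rho) T))).
  rewrite all_map; split => [/List.Forall_forall Fv|/ForallP/List.Forall_forall Pv].
    by apply/ForallP/List.Forall_forall => f Hf; apply/tripleP/Fv.
  by apply/List.Forall_forall => f Hf; apply/tripleP/Pv.
rewrite -(all_nth_ord (m := m) (x0 := ([ffun=> ord0], setT))) ?size_map /triple_holds ?inE //.
by split => H j; move: (H j); rewrite ffunE.
Qed.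

Definition bound_attrs fs := undup [seq x <- ternary_attrs fs | n <= x].
Definition compress (H : seq nat) x := if x < n then x else n + index x H.
Definition expand (H : seq nat) k := if k < n then k else nth 0 H (k - n).

Lemma compressK H x : x < n \/ x \in H -> expand H (compress H x) = x.
Proof.
rewrite /compress /expand; case: ltnP => [-> //|xn [//|xH]].
by rewrite ltnNge leq_addr /= addKn nth_index.
Qed.

Lemma compress_lt H x : x < n \/ x \in H -> compress H x < n + size H.
Proof.
rewrite /compress; case: ltnP => [xn _|_ [//|xH]]; first exact: ltn_addr.
by rewrite ltn_add2l index_mem.
Qed.

Lemma ternary_codeE T H (b : nat -> D) : List.Forall (@rel_on D) T ->
  (forall f, List.In f T -> arity f = 3) -> size T <= m -> size H <= 3 * m ->
  (forall f x, List.In f T -> x \in fattrs f -> x < n \/ x \in H) ->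
  (exists b', (forall x, x < n -> b x = b' x) /\ List.Forall (fun f => frel f b') T) <->
  exists v : nat -> D, (forall i : 'I_n, b i = v i) /\
                       forall j, triple_holds v (ternary_code (compress H) T j).
Proof.
move=> rel ter Tm Hm attrs.
have rho_id x : x < n -> compress H x = x by rewrite /compress => ->.
have sigma_id x : x < n -> expand H x = x by rewrite /expand => ->.
have sigmaK f x : List.In f T -> x \in fattrs f -> expand H (compress H x) = x.
  by move=> Hf xf; apply/compressK/(attrs f x Hf xf).
have rho_lt f x : List.In f T -> x \in fattrs f -> compress H x < nvars.
  move=> Hf xf; apply: (leq_trans (compress_lt (attrs f x Hf xf))).
  by rewrite /nvars; apply: leqW; rewrite leq_add2l.
have codeP v := ternary_codeP v rel ter Tm rho_lt.
rewrite (exists_rename b rel rho_id sigma_id sigmaK).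
split => -[v [bv /codeP Cv]]; exists v; split => //.
  by move=> i; apply: bv.
by move=> x xn; apply: (bv (Ordinal xn)).
Qed.

Lemma size_bound_attrs fs : size (bound_attrs fs) <= 3 * n_ternary fs.
Proof.
rewrite (leq_trans (size_undup _)) // size_filter -size_ternary_attrs.
exact: count_size.
Qed.

Lemma mem_bound_attrs fs f x : List.In f (ternary fs) -> x \in fattrs f ->
  x < n \/ x \in bound_attrs fs.
Proof.
move=> /In_filter [Hf /eqP af] xf; case: (ltnP x n) => [|xn]; [by left|right].
by rewrite mem_undup mem_filter xn (mem_ternary_attrs Hf af xf).
Qed.

Definition encode fs : code :=
  (ternary_code (compress (bound_attrs fs)) (ternary fs), small_code (small fs),
   constants_hold (small fs)).

Lemma bond_encode fs b : List.Forall (@rel_on D) fs -> (forall x, in_Gamma fs x = (x < n)) ->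
  subternaric fs -> normal fs -> n_ternary fs <= m ->
  bond fs b <-> code_holds (encode fs) [ffun i : 'I_n => b i].
Proof.
move=> rel G sub nf ter.
have bE (i : 'I_n) : [ffun i : 'I_n => b i] i = b i by rewrite ffunE.
have Tm : size (ternary fs) <= m by rewrite size_ternary.
have Hm : size (bound_attrs fs) <= 3 * m.
  by rewrite (leq_trans (size_bound_attrs fs)) // leq_mul2l ter orbT.
have ternE := ternary_codeE b (Forall_filter _ rel) (@arity_ternary _ fs) Tm Hm
  (@mem_bound_attrs fs).
rewrite bond_split // (small_codeP _ (Forall_filter _ rel)); first last.
- move=> f g x /In_filter [Hf af] /In_filter [Hg _] xf xg.
  exact: (count1_In_eq (p := fun k => x \in fattrs k) (nf f Hf af x xf)).
- by move=> f x /In_filter [Hf af] xf; rewrite -G /in_Gamma (nf f Hf af x xf).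
- by move=> f /In_filter [].
rewrite /code_holds /=.
split => [[[cS ci] [b' [bb' Fb']]]|[cS ci [v [bv Cv]]]].
- split => //; first by move=> i; rewrite !bE.
  have [|v [bv Cv]] := ternE.1; first by exists b'; split => // x; rewrite -G => /bb'.
  by exists v; split => // i; rewrite bE.
- split; first by split => // i; move: (ci i); rewrite !bE.
  have [|b' [bb' Fb']] := ternE.2; first by exists v; split => // i; rewrite -bv bE.
  by exists b'; split => // x; rewrite G => /bb'.
Qed.

Lemma ter_le_decode R : 0 < n -> ter_le R m -> exists c, R = decode c.
Proof.
move=> n0 [fs0 [rep0 [sub0 ter0]]].
have [fs [[rel [_ [G B]]] sub ter nf]] := normal_represents rep0 sub0.
have encodeE b := bond_encode b rel G sub nf (leq_trans ter ter0).
exists (encode fs); apply/setP => a; rewrite inE.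
pose b x := a (insubd (Ordinal n0) x).
have <- : [ffun i : 'I_n => b i] = a by apply/ffunP => i; rewrite ffunE /b valKd.
by apply/idP/asboolP => [/B/encodeE|/encodeE/B].
Qed.

End Code.

Definition code_bits n m d := m * (3 * nvars n m + d ^ 3) + n * (n + d ^ 2) + 1.

Lemma code_bits_small n m d : 4 <= n <= 3 * m -> 3 * m + n < 2 * d ->
  code_bits n m d + d <= d ^ 4.
Proof. by rewrite /code_bits /nvars => /andP [n4 nm] md; nia. Qed.

Lemma code_bits_large n m d : m * (3 * nvars n m + 1) + n * (n + 1) + 2 <= d ->
  code_bits n m d + d <= d ^ 4.
Proof.
rewrite /code_bits => dC.
have d3 : 1 <= d ^ 3 by rewrite expn_gt0; lia.
have : (m * (3 * nvars n m + 1) + n * (n + 1) + 2) * d ^ 3 <= d ^ 4.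
  by rewrite (expnS d 3) leq_mul2r dC orbT.
have : d <= d ^ 3 by rewrite -{1}(expn1 d) leq_pexp2l //; lia.
have : d ^ 2 <= d ^ 3 by rewrite leq_pexp2l //; lia.
nia.
Qed.

Lemma card_set (T : finType) : #|{: {set T}}| = 2 ^ #|T|.
Proof. by have := card_powerset [set: T]; rewrite powersetT !cardsT. Qed.

Section Counting.
Variables (D : finType) (n m : nat).

Lemma card_code :
  #|{: code D n m}| = (nvars n m ^ 3 * 2 ^ (#|D| ^ 3)) ^ m * (n * 2 ^ (#|D| ^ 2)) ^ n * 2.
Proof.
by rewrite !card_prod !card_ffun !card_prod !card_set !card_ffun !card_ord card_prod card_bool.
Qed.

Lemma card_code_le : #|{: code D n m}| <= 2 ^ code_bits n m #|D|.
Proof.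
have leq_expr a b e : a <= b -> a ^ e <= b ^ e by case: e => // e ab; rewrite leq_exp2r.
have leq_exp2 a : a <= 2 ^ a by apply/ltnW/ltn_expl.
rewrite card_code /code_bits expnD expn1 leq_mul2r /= expnD.
apply: leq_mul; [rewrite [m * (_ + _)]mulnC | rewrite [n * (_ + _)]mulnC]; rewrite expnM;
  apply/leq_expr; rewrite expnD leq_mul ?leq_exp2 //.
by rewrite [3 * _]mulnC expnM; apply/leq_expr/leq_exp2.
Qed.

Lemma card_ter_le : 0 < n ->
  #|[set R : relation D n | `[< ter_le R m >] ]| <= 2 ^ code_bits n m #|D|.
Proof.
move=> n0; apply: leq_trans card_code_le.
apply: leq_trans (leq_imset_card (@decode D n m) _); apply/subset_leq_card/subsetP => R.
by rewrite inE => /asboolP /(ter_le_decode n0) [c ->]; apply: imset_f.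
Qed.

End Counting.

Local Open Scope ring_scope.

Lemma prod_sub_recl (R : comPzRingType) (y : R) j :
  \prod_(i < j.+1) (y - i%:R) = y * \prod_(i < j) ((y - 1) - i%:R).
Proof.
rewrite big_ord_recl subr0; congr (_ * _).
by apply: eq_bigr => i _; rewrite /= /bump /= natrD; ring.
Qed.

Lemma fact_le_prod_sub (R : numDomainType) (j : nat) (y : R) :
  j.+1%:R <= y -> (j.+1)`!%:R <= \prod_(i < j) (y - i%:R).
Proof.
elim: j y => [|j IH] y yj; first by rewrite big_ord0.
rewrite prod_sub_recl factS natrM ler_pM //; apply: IH.
by rewrite lerBrDr natr1.
Qed.

Lemma le_gbinom (k : nat) (x : rat) : (2 <= k)%N -> k%:R <= x -> x <= gbinom x k.-1.
Proof.
case: k => [|[|k]] // _ kx; rewrite /gbinom prod_sub_recl.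
have x0 : 0 < x by apply: lt_le_trans kx; rewrite ltr0n.
rewrite ler_pdivlMr ?ltr0n ?fact_gt0 // ler_pM2l //.
by apply: fact_le_prod_sub; rewrite lerBrDr natr1.
Qed.

Section Share.
Variables (n m : nat).

Lemma share_lt1P (D : finType) : share D n m < 1 <-> exists R : relation D n, ~ ter_le R m.
Proof.
rewrite /share ltr_pdivrMr ?ltr0n ?expn_gt0 // mul1r ltr_nat.
set S := [set R | _].
have -> : (2 ^ (#|D| ^ n) = #|[set: relation D n]|)%N.
  by rewrite cardsT card_set card_ffun card_ord.
rewrite -[(_ < _)%N]andTb -(subsetT S) -properEcard properT eqEsubset subsetT /=.
split => [/subsetPn [R _]|[R nR]]; first by rewrite inE => /asboolP; exists R.
by apply/subsetPn; exists R; rewrite ?inE //; apply/asboolP.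
Qed.

Lemma share_le_inv_exp2 (D : finType) : (0 < n)%N ->
  (code_bits n m #|D| + #|D| <= #|D| ^ n)%N -> share D n m <= (2 ^ #|D|)%:R^-1.
Proof.
move=> n0 bits; rewrite /share ler_pdivrMr ?ltr0n ?expn_gt0 // mulrC.
rewrite ler_pdivlMr ?ltr0n ?expn_gt0 //.
rewrite -natrM ler_nat; apply: leq_trans (leq_mul (card_ter_le D m n0) (leqnn _)) _.
by rewrite -expnD leq_exp2l.
Qed.

Lemma share_lt1_of_gbinom_lt (D : finType) : (4 <= n)%N -> (1 < #|D|)%N ->
  gbinom ((3 * m + n)%:R / 2%:R) n.-1 < #|D|%:R -> share D n m < 1.
Proof.
move=> n4 D2 hD; have [nm|mn] := leqP n (3 * m); last first.
  by apply/share_lt1P; exists (eq_rel D n); apply: eq_rel_not_ter_le => //; lia.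
have md : (3 * m + n < 2 * #|D|)%N.
  have nx : n%:R <= (3 * m + n)%:R / 2%:R :> rat by rewrite ler_pdivlMr // -natrM ler_nat; lia.
  have := le_lt_trans (le_gbinom (ltnW (ltnW n4)) nx) hD.
  by rewrite ltr_pdivrMr // -natrM ltr_nat; lia.
apply: le_lt_trans (share_le_inv_exp2 _ _) _; first lia.
  apply: leq_trans (code_bits_small _ md) _; first by rewrite n4 nm.
  by rewrite leq_pexp2l //; lia.
rewrite invf_lt1 ?ltr0n ?expn_gt0 // ltr1n.
by apply: leq_ltn_trans (ltn_expl _ _); lia.
Qed.

Lemma share_vanishes : (4 <= n)%N -> forall eps : rat, 0 < eps ->
  exists N, forall D : finType, (N <= #|D|)%N -> share D n m < eps.
Proof.
move=> n4 eps eps0.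
exists (maxn (m * (3 * nvars n m + 1) + n * (n + 1) + 2) (Num.bound eps^-1)) => D.
rewrite geq_max => /andP [dC dB].
apply: le_lt_trans (share_le_inv_exp2 _ _) _; first lia.
  by apply: leq_trans (code_bits_large dC) _; rewrite leq_pexp2l //; lia.
rewrite invf_plt ?posrE ?ltr0n ?expn_gt0 //.
apply: lt_le_trans (archi_boundP _) _; first by rewrite invr_ge0 ltW.
by rewrite ler_nat (leq_trans dB) // ltnW // ltn_expl.
Qed.

End Share.

Lemma exists_not_ter_le n k : (4 <= n)%N -> exists (D : finType) (R : relation D n), ~ ter_le R k.
Proof.
move=> n4; have [N shareN] := share_vanishes k n4 ltr01.
by exists ('I_N : finType); apply/share_lt1P/shareN; rewrite card_ord.
Qed.

Theorem theorem45 (n m : nat) :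
  (4 <= n)%N ->
  (forall D : finType, (1 < #|D|)%N ->
     (gbinom ((3 * m + n)%:R / 2%:R) n.-1 < #|D|%:R)%R ->
     (share D n m < 1)%R)
  /\ (forall eps : rat, (0 < eps)%R ->
        exists N : nat, forall D : finType, (N <= #|D|)%N -> (share D n m < eps)%R)
  /\ (forall k : nat, exists (D : finType) (R : relation D n), ~ ter_le R k).
Proof.
move=> n4; split; [|split].
- by move=> D D2; apply: share_lt1_of_gbinom_lt.
- exact: share_vanishes.
- by move=> k; apply: exists_not_ter_le.
Qed.
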